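(* (a) Let $u:\mathbb{Z}^k\to\mathbb{C}$ satisfy, for all $1\le i\le k-1$ and all $\vec n\in\mathbb{Z}^k$ with $n_i=n_{i+1}$, the backward two-body boundary condition $\big((\nabla^{\mathrm{bwd}}_i-q\nabla^{\mathrm{bwd}}_{i+1})u\big)(\vec n)=0$. Then for every $\vec n\in\mathbb{W}^k$, $(1-q)\sum_{i=1}^k(\nabla^{\mathrm{bwd}}_iu)(\vec n)=(\mathcal{H}^{\mathrm{bwd}}u)(\vec n)$ (with $\mathcal{H}^{\mathrm{bwd}}$ applied to the restriction of $u$ to $\mathbb{W}^k$). (b) Let $u:\mathbb{Z}^k\to\mathbb{C}$ satisfy, for all $1\le i\le k-1$ and all $\vec n\in\mathbb{Z}^k$ with $n_i=n_{i+1}$, the forward two-body boundary condition $\big((q\nabla^{\mathrm{fwd}}_i-\nabla^{\mathrm{fwd}}_{i+1})u\big)(\vec n)=0$. Then for every $\vec n\in\mathbb{W}^k$, $(1-q)\sum_{i=1}^k(\nabla^{\mathrm{fwd}}_iu)(\vec n)=(\mathcal{H}^{\mathrm{cfwd}}u)(\vec n)$.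
   Context: Fix $q\in(0,1)$ and an integer $k\ge1$. Let $\mathbb{W}^k=\{\vec n\in\mathbb{Z}^k: n_1\ge\cdots\ge n_k\}$; $\vec n_i^{\pm}=(n_1,\dots,n_i\pm1,\dots,n_k)$. For $\vec n\in\mathbb{W}^k$ write $n_1=\cdots=n_{c_1}>n_{c_1+1}=\cdots=n_{c_1+c_2}>\cdots$, with $M=M(\vec n)$ clusters of sizes $(c_1,\dots,c_M)$. For $u:\mathbb{Z}^k\to\mathbb{C}$, $(\nabla^{\mathrm{bwd}}_iu)(\vec n)=u(\vec n_i^-)-u(\vec n)$ and $(\nabla^{\mathrm{fwd}}_iu)(\vec n)=u(\vec n_i^+)-u(\vec n)$. The $q$-Boson backward generator is $(\mathcal{H}^{\mathrm{bwd}}f)(\vec n)=\sum_{i=1}^{M}(1-q^{c_i})\big(f(\vec n^{-}_{c_1+\cdots+c_i})-f(\vec n)\big)$ and the conjugated forward generator is $(\mathcal{H}^{\mathrm{cfwd}}f)(\vec n)=\sum_{i=1}^{M}(1-q^{c_i})\big(f(\vec n^{+}_{c_1+\cdots+c_{i-1}+1})-f(\vec n)\big)$ (with index $1$ when $i=1$), for $f:\mathbb{W}^k\to\mathbb{C}$. *)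

From HB Require Import structures.
From mathcomp Require Import all_boot all_order all_algebra.
Set Implicit Arguments. Unset Strict Implicit. Unset Printing Implicit Defensive.
Import Order.TTheory GRing.Theory Num.Theory.
Local Open Scope ring_scope.

(* Vectors n in Z^k are functions 'I_k -> int; coordinate i (1-based in the
   paper) is the ordinal i-1 (0-based here). *)

Definition inW (k : nat) (n : 'I_k -> int) : Prop :=
  forall i j : 'I_k, (i <= j)%N -> n j <= n i.

Definition shift (k : nat) (n : 'I_k -> int) (m : nat) (d : int) : 'I_k -> int :=
  fun j => if val j == m then n j + d else n j.

Definition grad_bwd (R : nzRingType) (k : nat) (m : nat) (u : ('I_k -> int) -> R)
  (n : 'I_k -> int) : R := u (shift n m (-1)) - u n.
Definition grad_fwd (R : nzRingType) (k : nat) (m : nat) (u : ('I_k -> int) -> R)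
  (n : 'I_k -> int) : R := u (shift n m 1) - u n.

Fixpoint rle_aux (x : int) (c : nat) (s : seq int) : seq nat :=
  match s with
  | [::] => [:: c]
  | y :: t => if y == x then rle_aux x c.+1 t else c :: rle_aux y 1 t
  end.
Definition rle (s : seq int) : seq nat :=
  if s is x :: t then rle_aux x 1 t else [::].

Definition clusters (k : nat) (n : 'I_k -> int) : seq nat :=
  rle [seq n i | i <- enum 'I_k].

(* q-Boson backward generator:
   sum_{i=1}^M (1 - q^{c_i}) (f(n^-_{c_1+...+c_i}) - f(n));
   the 1-based index c_1+...+c_i is the 0-based index (c_1+...+c_i) - 1. *)
Definition H_bwd (R : nzRingType) (q : R) (k : nat) (f : ('I_k -> int) -> R)
  (n : 'I_k -> int) : R :=
  let cs := clusters n in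
  \sum_(i < size cs)
    (1 - q ^+ nth 0%N cs i) *
    (f (shift n ((\sum_(j < i.+1) nth 0%N cs j).-1)%N (-1)) - f n).

(* conjugated forward generator:
   sum_{i=1}^M (1 - q^{c_i}) (f(n^+_{c_1+...+c_{i-1}+1}) - f(n));
   the 1-based index c_1+...+c_{i-1}+1 is the 0-based index c_1+...+c_{i-1}. *)
Definition H_cfwd (R : nzRingType) (q : R) (k : nat) (f : ('I_k -> int) -> R)
  (n : 'I_k -> int) : R :=
  let cs := clusters n in
  \sum_(i < size cs)
    (1 - q ^+ nth 0%N cs i) *
    (f (shift n (\sum_(j < i) nth 0%N cs j)%N 1) - f n).

From HB Require Import structures.
From mathcomp Require Import all_boot all_order all_algebra.
From mathcomp Require Import ring zify.
Set Implicit Arguments. Unset Strict Implicit. Unset Printing Implicit Defensive.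
Import Order.TTheory GRing.Theory Num.Theory.
Local Open Scope ring_scope.

(* Split the coordinates 0..k-1 of n into its clusters, i.e. the maximal blocks
   of equal consecutive entries computed by the run-length encoding 'rle'.
   (1) 'sum_by_clusters': a sum over 0..size s - 1 can be regrouped cluster by
       cluster; the contribution of a block is recorded by a function
       G (start) (length), and 'block_sum' sums G over the cluster sizes.
   (2) Inside a cluster the boundary condition makes the gradients a geometric
       progression of ratio q (backward: h j = q h (j+1); forward:
       q h j = h (j+1)), so (1 - q) times the block sum telescopes to
       (1 - q^c) times the gradient at the last (resp. first) site of the
       block: 'geometric_block_bwd', 'geometric_block_fwd'.
   (3) The generators H_bwd and H_cfwd are precisely such block sums. *)

Definition flat_block (s : seq int) (a b : nat) : Prop :=
  (a + b <= size s)%N /\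
  forall j, (a <= j)%N -> (j.+1 < a + b)%N -> nth 0 s j = nth 0 s j.+1.

Lemma flat_block_catl (p s : seq int) (a b : nat) :
  flat_block s a b -> flat_block (p ++ s) (size p + a) b.
Proof.
move=> [size_ab flat]; split; first by rewrite size_cat -addnA leq_add2l.
move=> j aj jab; rewrite !nth_cat.
have [jp|pj] := ltnP j (size p); first lia.
rewrite ltnNge (leq_trans pj) // subSn //; apply: flat; first by rewrite leq_subRL.
by rewrite -!subSn ?(leqW pj) // leq_subLR addnA.
Qed.

Section ClusterSums.
Variable R : nmodType.

Definition block_sum (G : nat -> nat -> R) (cs : seq nat) : R :=
  \sum_(i < size cs) G (\sum_(j < i) nth 0%N cs j)%N (nth 0%N cs i).

Lemma block_sum_cons (G : nat -> nat -> R) (c : nat) (cs : seq nat) :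
  block_sum G (c :: cs) = G 0%N c + block_sum (fun a => G (c + a)%N) cs.
Proof.
rewrite /block_sum big_ord_recl big_ord0; congr (_ + _).
by apply: eq_bigr => i _; rewrite big_ord_recl.
Qed.

(* The statement of 'sum_by_clusters' generalised for the induction along
   'rle_aux x c t', which encodes the sequence nseq c x ++ t. *)
Lemma sum_by_clusters_aux (t : seq int) (x : int) (c : nat)
    (F : nat -> R) (G : nat -> nat -> R) :
  (forall a b, flat_block (nseq c x ++ t) a b -> G a b = \sum_(j < b) F (a + j)%N) ->
  \sum_(j < c + size t) F j = block_sum G (rle_aux x c t).
Proof.
elim: t x c F G => [|y t IH] x c F G HG /=.
  rewrite block_sum_cons /block_sum big_ord0 addr0 addn0 HG //.
  split=> [|j _ jc]; first by rewrite cats0 size_nseq.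
  by rewrite cats0 !nth_nseq jc ltnW.
case: eqP HG => [->|_] HG.
  have runS : nseq c x ++ x :: t = nseq c.+1 x ++ t by elim: c {HG} => //= c ->.
  by rewrite addnS -addSn; apply: IH; rewrite -runS.
rewrite block_sum_cons big_split_ord /=; congr (_ + _).
  rewrite HG; split=> [|j _ jc]; first by rewrite size_cat size_nseq leq_addr.
  by rewrite !nth_cat size_nseq jc ltnW // !nth_nseq jc ltnW.
rewrite -add1n; apply: (IH y 1%N (fun j => F (c + j)%N)) => a b flat_ab; rewrite HG.
  by apply: eq_bigr => j _; rewrite addnA.
by rewrite -[c in (c + a)%N](size_nseq c x); apply: flat_block_catl.
Qed.

Lemma sum_by_clusters (s : seq int) (F : nat -> R) (G : nat -> nat -> R) :
  (forall a b, flat_block s a b -> G a b = \sum_(j < b) F (a + j)%N) ->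
  \sum_(j < size s) F j = block_sum G (rle s).
Proof.
case: s => [|x t] HG; first by rewrite big_ord0 /block_sum big_ord0.
by rewrite /= -add1n; apply: sum_by_clusters_aux.
Qed.

End ClusterSums.

Section GeometricBlocks.
Variables (R : comNzRingType) (q : R).

Lemma geometric_block_bwd (h : nat -> R) (a c : nat) :
  (forall j, (a <= j)%N -> (j.+1 < a + c)%N -> h j = q * h j.+1) ->
  (1 - q) * \sum_(j < c) h (a + j)%N = (1 - q ^+ c) * h (a + c).-1.
Proof.
elim: c => [|c IH] geom; first by rewrite big_ord0 expr0 subrr mulr0 mul0r.
rewrite big_ord_recr /= mulrDr addnS /=.
case: c IH geom => [|c] IH geom; first by rewrite big_ord0 mulr0 add0r addn0.
rewrite IH => [|j aj jac]; last by apply: geom; lia.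
rewrite addnS /= (geom (a + c)%N) ?leq_addr ?addnS //.
by rewrite !exprS; ring.
Qed.

Lemma geometric_block_fwd (h : nat -> R) (a c : nat) :
  (forall j, (a <= j)%N -> (j.+1 < a + c)%N -> q * h j = h j.+1) ->
  (1 - q) * \sum_(j < c) h (a + j)%N = (1 - q ^+ c) * h a.
Proof.
elim: c a => [|c IH] a geom; first by rewrite big_ord0 expr0 subrr mulr0 mul0r.
rewrite big_ord_recl /= mulrDr addn0.
under eq_bigr => j _ do rewrite /bump /= add1n -addSnnS.
rewrite IH => [|j aj jac]; last by apply: geom; lia.
case: c {IH} geom => [|c] geom; first by rewrite expr0 subrr mul0r addr0 expr1.
rewrite -(geom a) ?leqnn ?addnS ?ltnS ?leq_addr //.
by rewrite !exprS; ring.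
Qed.

End GeometricBlocks.

Definition values (k : nat) (n : 'I_k -> int) : seq int := [seq n i | i <- enum 'I_k].

Lemma size_values (k : nat) (n : 'I_k -> int) : size (values n) = k.
Proof. by rewrite size_map size_enum_ord. Qed.

Lemma nth_values (k : nat) (n : 'I_k -> int) (j : nat) (hj : (j < k)%N) :
  nth 0 (values n) j = n (Ordinal hj).
Proof.
rewrite (nth_map (Ordinal hj)) ?size_enum_ord //; congr n; apply: val_inj.
by rewrite /= nth_enum_ord.
Qed.

Lemma flat_block_values (k : nat) (n : 'I_k -> int) (a b j : nat) :
  flat_block (values n) a b -> (a <= j)%N -> (j.+1 < a + b)%N ->
  exists (i i' : 'I_k), [/\ val i = j, val i' = (val i).+1 & n i = n i'].
Proof.
move=> [size_ab flat] aj jab; rewrite size_values in size_ab.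
have lt_j1 : (j.+1 < k)%N by apply: leq_trans size_ab.
have lt_j : (j < k)%N by apply: ltnW.
exists (Ordinal lt_j), (Ordinal lt_j1); split=> //.
by rewrite -!nth_values; apply: flat.
Qed.

Lemma H_bwd_block_sum (R : comNzRingType) (q : R) (k : nat)
    (u : ('I_k -> int) -> R) (n : 'I_k -> int) :
  H_bwd q u n = block_sum (fun a c => (1 - q ^+ c) * grad_bwd (a + c).-1 u n) (clusters n).
Proof. by apply: eq_bigr => i _; rewrite big_ord_recr. Qed.

Lemma bwd_generator_identity (R : comNzRingType) (q : R) (k : nat)
    (u : ('I_k -> int) -> R) :
  (forall (i j : 'I_k) (n : 'I_k -> int), val j = (val i).+1 -> n i = n j ->
     grad_bwd (val i) u n - q * grad_bwd (val j) u n = 0) ->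
  forall n : 'I_k -> int, (1 - q) * \sum_(i < k) grad_bwd i u n = H_bwd q u n.
Proof.
move=> boundary n; rewrite H_bwd_block_sum mulr_sumr.
have regroup := sum_by_clusters (s := values n)
  (F := fun j => (1 - q) * grad_bwd j u n)
  (G := fun a c => (1 - q ^+ c) * grad_bwd (a + c).-1 u n).
rewrite size_values in regroup; apply: regroup => a b flat.
rewrite -mulr_sumr (geometric_block_bwd (h := fun j => grad_bwd j u n)) // => j aj jab.
have [i [i' [<- succ eq_n]]] := flat_block_values flat aj jab.
by rewrite -succ; apply/subr0_eq/boundary.
Qed.

Lemma fwd_generator_identity (R : comNzRingType) (q : R) (k : nat)
    (u : ('I_k -> int) -> R) :
  (forall (i j : 'I_k) (n : 'I_k -> int), val j = (val i).+1 -> n i = n j ->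
     q * grad_fwd (val i) u n - grad_fwd (val j) u n = 0) ->
  forall n : 'I_k -> int, (1 - q) * \sum_(i < k) grad_fwd i u n = H_cfwd q u n.
Proof.
move=> boundary n; rewrite mulr_sumr.
have regroup := sum_by_clusters (s := values n)
  (F := fun j => (1 - q) * grad_fwd j u n)
  (G := fun a c => (1 - q ^+ c) * grad_fwd a u n).
rewrite size_values in regroup; apply: regroup => a b flat.
rewrite -mulr_sumr (geometric_block_fwd (h := fun j => grad_fwd j u n)) // => j aj jab.
have [i [i' [<- succ eq_n]]] := flat_block_values flat aj jab.
by rewrite -succ; apply/subr0_eq/boundary.
Qed.

Theorem proposition2p5 (C : numClosedFieldType) (q : C) (hq0 : 0 < q) (hq1 : q < 1)
  (k : nat) (hk : (1 <= k)%N) :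
  (forall u : ('I_k -> int) -> C,
     (forall (i j : 'I_k) (n : 'I_k -> int), val j = (val i).+1 -> n i = n j ->
        grad_bwd (val i) u n - q * grad_bwd (val j) u n = 0) ->
     forall n : 'I_k -> int, inW n ->
       (1 - q) * \sum_(i < k) grad_bwd i u n = H_bwd q u n)
  /\
  (forall u : ('I_k -> int) -> C,
     (forall (i j : 'I_k) (n : 'I_k -> int), val j = (val i).+1 -> n i = n j ->
        q * grad_fwd (val i) u n - grad_fwd (val j) u n = 0) ->
     forall n : 'I_k -> int, inW n ->
       (1 - q) * \sum_(i < k) grad_fwd i u n = H_cfwd q u n).
Proof.
split=> u boundary n _.
- exact: bwd_generator_identity.
- exact: fwd_generator_identity.
Qed.
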